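(* Let $\Gamma$ be a $\Bbbk$-algebra and $\sim$ an equivalence relation on $\mathrm{cfs}(\Gamma)$. If $0\to U\to V\to W\to0$ is a short exact sequence of $\Gamma$-modules and $V$ is a block module, then $U$ and $W$ are block modules and $\mathrm{Supp}(V)=\mathrm{Supp}(U)\cup\mathrm{Supp}(W)$.
   Context: $\mathrm{cfs}(\Gamma)$: maximal two-sided ideals $\mathfrak m$ of $\Gamma$ with $\dim\Gamma/\mathfrak m<\infty$. For a class $B$, $\mathcal W(B)=\{\mathfrak m_1\cdots\mathfrak m_k:k\ge0,\mathfrak m_i\in B\}$; for a $\Gamma$-module $V$, $V(B)=\{v:\mathfrak m v=0$ for some $\mathfrak m\in\mathcal W(B)\}$. $V$ is a block module if $V=\bigoplus_BV(B)$; $\mathrm{Supp}(V)=\{B:V(B)\neq0\}$. *)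

From Stdlib Require List.
From HB Require Import structures.
From mathcomp Require Import all_boot all_order all_algebra.
Set Implicit Arguments. Unset Strict Implicit. Unset Printing Implicit Defensive.
Import GRing.Theory.
Local Open Scope ring_scope.

Section BlockDefs.
Variables (k : fieldType) (G : algType k).

Definition twoSidedIdeal (I : G -> Prop) : Prop :=
  [/\ I 0,
      (forall x y, I x -> I y -> I (x + y)),
      (forall a x, I x -> I (a * x)) &
      (forall a x, I x -> I (x * a))].

Definition maxTwoSidedIdeal (I : G -> Prop) : Prop :=
  [/\ twoSidedIdeal I, ~ I 1 &
      forall J, twoSidedIdeal J -> (forall x, I x -> J x) ->
        (forall x, J x -> I x) \/ (forall x, J x)].

Definition finCodim (I : G -> Prop) : Prop :=
  exists (n : nat) (s : 'I_n -> G), forall x : G,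
    exists c : 'I_n -> k, I (x - \sum_(i < n) c i *: s i).

Definition cfs (I : G -> Prop) : Prop := maxTwoSidedIdeal I /\ finCodim I.

Definition equiv_on_cfs (eqv : (G -> Prop) -> (G -> Prop) -> Prop) : Prop :=
  [/\ (forall m, cfs m -> eqv m m),
      (forall m n, cfs m -> cfs n -> eqv m n -> eqv n m) &
      (forall m n p, cfs m -> cfs n -> cfs p -> eqv m n -> eqv n p -> eqv m p)].

Definition isClass (eqv : (G -> Prop) -> (G -> Prop) -> Prop)
    (B : (G -> Prop) -> Prop) : Prop :=
  exists m0, cfs m0 /\ forall m, B m <-> (cfs m /\ eqv m m0).

Definition sameClass (B B' : (G -> Prop) -> Prop) : Prop :=
  forall m, B m <-> B' m.

Definition idealMul (I J : G -> Prop) (x : G) : Prop :=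
  exists (n : nat) (a b : 'I_n -> G),
    (forall i, I (a i) /\ J (b i)) /\ x = \sum_(i < n) a i * b i.

(* m_1 ... m_k (the empty product is G itself) *)
Definition idealProd (ms : seq (G -> Prop)) : G -> Prop :=
  foldr idealMul (fun _ => True) ms.

(* V(B) = { v | m v = 0 for some m in W(B) } *)
Definition comp (V : lmodType G) (B : (G -> Prop) -> Prop) (v : V) : Prop :=
  exists ms : seq (G -> Prop), (forall m, List.In m ms -> B m) /\
    (forall a, idealProd ms a -> a *: v = 0).

(* V = (+)_B V(B), a direct sum over the equivalence classes B *)
Definition blockModule (eqv : (G -> Prop) -> (G -> Prop) -> Prop)
    (V : lmodType G) : Prop :=
  (forall v : V, exists (n : nat) (B : 'I_n -> ((G -> Prop) -> Prop)) (x : 'I_n -> V),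
      (forall i, isClass eqv (B i) /\ comp (B i) (x i)) /\ v = \sum_(i < n) x i) /\
  (forall (n : nat) (B : 'I_n -> ((G -> Prop) -> Prop)) (x : 'I_n -> V),
      (forall i, isClass eqv (B i) /\ comp (B i) (x i)) ->
      (forall i j, i != j -> ~ sameClass (B i) (B j)) ->
      \sum_(i < n) x i = 0 -> forall i, x i = 0).

Definition inSupp (V : lmodType G) (B : (G -> Prop) -> Prop) : Prop :=
  exists v : V, comp B v /\ v <> 0.

End BlockDefs.

From Pilot Require Import Defs.
From HB Require Import structures.
From mathcomp Require Import all_boot all_order all_algebra.
From mathcomp Require Import boolp.
Set Implicit Arguments. Unset Strict Implicit. Unset Printing Implicit Defensive.
Import GRing.Theory.
Local Open Scope ring_scope.

(* Distinct maximal ideals are comaximal, and comaximality passes to finite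
   products, so for classes B <> C every product of ideals of B is comaximal
   with every product of ideals of C.  Writing 1 = a + b accordingly, an
   element of M(B) that is a sum of components of other classes is killed by
   both a and b, hence vanishes.  Consequently sums of components are always
   direct, an element of M(B) equals the B-part of any decomposition of it,
   and a block module is just a module whose elements are sums of components.
   W inherits the decomposition of V through g.  For U, group the
   decomposition of f u by classes: projecting g (f u) = 0 onto a class shows
   that each class-part lies in ker g = f(U).  Projecting onto B gives the
   support identity. *)

Section Ideals.
Variables (k : fieldType) (G : algType k).
Implicit Types (I J m n : G -> Prop) (ms : seq (G -> Prop)).

Definition idealAdd I J (x : G) : Prop := exists a b, [/\ I a, J b & x = a + b].

Definition comaximal I J : Prop := idealAdd I J 1.

Lemma idealMulD I J x y :
  idealMul I J x -> idealMul I J y -> idealMul I J (x + y).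
Proof.
case=> n1 [a1 [b1 [H1 ->]]] [n2 [a2 [b2 [H2 ->]]]].
pose glue (c1 : 'I_n1 -> G) (c2 : 'I_n2 -> G) (i : 'I_(n1 + n2)) :=
  match split i with inl j => c1 j | inr j => c2 j end.
exists (n1 + n2)%N, (glue a1 a2), (glue b1 b2); split.
  by move=> i; rewrite /glue; case: (split i) => j; [exact: H1 | exact: H2].
rewrite big_split_ord /glue; congr (_ + _); apply: eq_bigr => i _.
  by rewrite (unsplitK (inl i)).
by rewrite (unsplitK (inr i)).
Qed.

Lemma idealMul_ideal I J :
  twoSidedIdeal I -> twoSidedIdeal J -> twoSidedIdeal (idealMul I J).
Proof.
case=> _ _ IL _ [_ _ _ JR]; split.
- by exists 0%N, (fun _ => 0), (fun _ => 0); split; [case | rewrite big_ord0].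
- exact: idealMulD.
- move=> c x [n [a [b [H ->]]]]; exists n, (fun i => c * a i), b; split.
    by move=> i; have [? ?] := H i; split => //; apply: IL.
  by rewrite mulr_sumr; apply: eq_bigr => i _; rewrite mulrA.
- move=> c x [n [a [b [H ->]]]]; exists n, a, (fun i => b i * c); split.
    by move=> i; have [? ?] := H i; split => //; apply: JR.
  by rewrite mulr_suml; apply: eq_bigr => i _; rewrite mulrA.
Qed.

Lemma idealProd_ideal ms : (forall m, List.In m ms -> twoSidedIdeal m) ->
  twoSidedIdeal (idealProd ms).
Proof.
elim: ms => [|m ms IH] Hms /=; first by split.
apply: idealMul_ideal; first exact: Hms (or_introl erefl).
by apply: IH => m' Hm'; apply: Hms; right.
Qed.

Lemma idealMul_subr I J x : twoSidedIdeal J -> idealMul I J x -> J x.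
Proof.
case=> J0 JD JL _ [n [a [b [H ->]]]].
by apply: big_ind => // i _; apply: JL; case: (H i).
Qed.

Lemma idealMulS I J J' x : (forall y, J y -> J' y) ->
  idealMul I J x -> idealMul I J' x.
Proof.
move=> sJJ' [n [a [b [H ->]]]]; exists n, a, b; split => // i.
by have [? ?] := H i; split => //; apply: sJJ'.
Qed.

Lemma idealProd_catl ms1 ms2 x : idealProd (ms1 ++ ms2) x -> idealProd ms1 x.
Proof. by elim: ms1 x => [|m ms IH] x //=; apply: idealMulS; exact: IH. Qed.

Lemma idealProd_catr ms1 ms2 x :
  (forall m, List.In m ms1 -> twoSidedIdeal m) ->
  (forall m, List.In m ms2 -> twoSidedIdeal m) ->
  idealProd (ms1 ++ ms2) x -> idealProd ms2 x.
Proof.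
move=> Hms1 Hms2; elim: ms1 Hms1 x => [|m ms IH] //= Hms x Hx.
apply: IH => [m' Hm'|]; first by apply: Hms; right.
apply: idealMul_subr Hx; apply: idealProd_ideal => m' Hm'.
by case: (List.in_app_or _ _ _ Hm') => [?|]; [apply: Hms; right | apply: Hms2].
Qed.

Lemma comaximal_sym I J : comaximal I J -> comaximal J I.
Proof. by case=> a [b [Ia Jb E]]; exists b, a; rewrite addrC. Qed.

Lemma comaximalMl I1 I2 J : twoSidedIdeal J ->
  comaximal I1 J -> comaximal I2 J -> comaximal (idealMul I1 I2) J.
Proof.
case=> _ JD JL JR [a1 [b1 [Ia1 Jb1 E1]]] [a2 [b2 [Ia2 Jb2 E2]]].
exists (a1 * a2), (a1 * b2 + b1 * a2 + b1 * b2); split.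
- by exists 1%N, (fun _ => a1), (fun _ => a2); rewrite big_ord1.
- by apply: (JD); [apply: (JD); [apply: (JL) | apply: JR] | apply: JL].
- have -> : 1 = (a1 + b1) * (a2 + b2) by rewrite -E1 -E2 mulr1.
  by rewrite mulrDl !mulrDr !addrA.
Qed.

Lemma comaximal_prodl ms J : twoSidedIdeal J ->
  (forall m, List.In m ms -> comaximal m J) -> comaximal (idealProd ms) J.
Proof.
move=> HJ; elim: ms => [|m ms IH] Hms /=.
  by case: HJ => J0 _ _ _; exists 1, 0; rewrite addr0.
apply: comaximalMl => //; first exact: Hms (or_introl erefl).
by apply: IH => m' Hm'; apply: Hms; right.
Qed.

Lemma comaximal_prod ms ns :
  (forall m, List.In m ms -> twoSidedIdeal m) ->
  (forall n, List.In n ns -> twoSidedIdeal n) ->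
  (forall m n, List.In m ms -> List.In n ns -> comaximal m n) ->
  comaximal (idealProd ms) (idealProd ns).
Proof.
move=> Hms Hns Hmn; apply: comaximal_prodl; first exact: idealProd_ideal.
move=> m Hm; apply/comaximal_sym/comaximal_prodl; first exact: Hms.
by move=> n Hn; apply/comaximal_sym/Hmn.
Qed.

Lemma idealAdd_ideal I J :
  twoSidedIdeal I -> twoSidedIdeal J -> twoSidedIdeal (idealAdd I J).
Proof.
case=> I0 ID IL IR [J0 JD JL JR]; split.
- by exists 0, 0; rewrite addr0.
- move=> _ _ [a [b [Ia Jb ->]]] [a' [b' [Ia' Jb' ->]]].
  by exists (a + a'), (b + b'); rewrite addrACA; split; [apply: ID | apply: JD |].
- move=> c _ [a [b [Ia Jb ->]]].
  by exists (c * a), (c * b); rewrite mulrDr; split; [apply: IL | apply: JL |].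
- move=> c _ [a [b [Ia Jb ->]]].
  by exists (a * c), (b * c); rewrite mulrDl; split; [apply: IR | apply: JR |].
Qed.

Lemma maxIdeal_comaximal m n : maxTwoSidedIdeal m -> maxTwoSidedIdeal n ->
  m = n \/ comaximal m n.
Proof.
move=> [Im m1 m_max] [In n1 n_max].
have [[m0 _ _ _] [n0 _ _ _]] := (Im, In).
have sub_m_mn x : m x -> idealAdd m n x by exists x, 0; rewrite addr0.
case: (m_max _ (idealAdd_ideal Im In) sub_m_mn) => [mn_m | mn_all]; last first.
  by right; apply: mn_all.
have sub_nm x : n x -> m x by move=> nx; apply: mn_m; exists 0, x; rewrite add0r.
case: (n_max _ Im sub_nm) => [sub_mn | m_all]; last by case: m1; apply: m_all.
by left; apply/funext => x; apply/propext; split; [apply: sub_mn | apply: sub_nm].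
Qed.

End Ideals.

Section Classes.
Variables (k : fieldType) (G : algType k).
Variable eqv : (G -> Prop) -> (G -> Prop) -> Prop.
Hypothesis eqv_equiv : equiv_on_cfs eqv.
Implicit Types (B C : (G -> Prop) -> Prop) (m n : G -> Prop).

Lemma class_cfs B m : isClass eqv B -> B m -> cfs m.
Proof. by case=> m0 [_ HB] /HB []. Qed.

Lemma class_ideal B m : isClass eqv B -> B m -> twoSidedIdeal m.
Proof. by move=> HB /(class_cfs HB) [[]]. Qed.

Lemma sameClass_common B C m : isClass eqv B -> isClass eqv C ->
  B m -> C m -> sameClass B C.
Proof.
case: eqv_equiv => _ eqv_sym eqv_trans [m0 [cm0 HB]] [m1 [cm1 HC]] Bm Cm p.
have [cm m_m0] := (HB m).1 Bm; have [_ m_m1] := (HC m).1 Cm.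
rewrite HB HC; split=> -[cp p_eqv]; split=> //.
  by apply: (eqv_trans p m m1) => //; apply: (eqv_trans p m0 m) => //; apply: eqv_sym.
by apply: (eqv_trans p m m0) => //; apply: (eqv_trans p m1 m) => //; apply: eqv_sym.
Qed.

Lemma class_comaximal B C m n : isClass eqv B -> isClass eqv C ->
  ~ sameClass B C -> B m -> C n -> comaximal m n.
Proof.
move=> HB HC BC Bm Cn.
have [[maxm _] [maxn _]] := (class_cfs HB Bm, class_cfs HC Cn).
case: (maxIdeal_comaximal maxm maxn) => // mn.
by case: BC; apply: (sameClass_common HB HC Bm); rewrite mn.
Qed.

End Classes.

Section ClassRep.
Variables (k : fieldType) (G : algType k) (I : finType).
Variable B : I -> (G -> Prop) -> Prop.

(* The default [i] of [odflt] is never used: [i] lies in its own class. *)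
Definition classRep (i : I) : I :=
  odflt i [pick j | `[< sameClass (B j) (B i) >]].

Lemma classRep_same i : sameClass (B (classRep i)) (B i).
Proof. by rewrite /classRep; case: pickP => [j /asboolP | _] //=; split. Qed.

Lemma classRep_eq i i' : sameClass (B i) (B i') -> classRep i = classRep i'.
Proof.
move=> ii'; rewrite /classRep (eq_pick (Q := fun j => `[< sameClass (B j) (B i') >])).
  by case: pickP => [//| /(_ i')]; rewrite asboolT.
by move=> j; apply/asboolP/asboolP => ji m; rewrite ji ?ii' // -ii'.
Qed.

End ClassRep.

Section Components.
Variables (k : fieldType) (G : algType k) (M : lmodType G).
Implicit Types (S : (G -> Prop) -> Prop) (v w : M).

Lemma comp0 S : Defs.comp S (0 : M).
Proof. by exists [::]; split=> // a _; rewrite scaler0. Qed.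

Lemma compN S v : Defs.comp S v -> Defs.comp S (- v).
Proof.
case=> ms [Sms ann]; exists ms; split=> // a /ann.
by rewrite scalerN => ->; rewrite oppr0.
Qed.

Lemma compS S S' v : (forall m, S m -> S' m) -> Defs.comp S v -> Defs.comp S' v.
Proof. by move=> sSS' [ms [Sms ann]]; exists ms; split=> // m /Sms /sSS'. Qed.

Section IdealSet.
Variable S : (G -> Prop) -> Prop.
Hypothesis S_ideal : forall m, S m -> twoSidedIdeal m.

Lemma compD v w : Defs.comp S v -> Defs.comp S w -> Defs.comp S (v + w).
Proof.
case=> ms [Sms ann_v] [ns [Sns ann_w]]; exists (ms ++ ns); split.
  by move=> m /(List.in_app_or ms ns m) [/Sms | /Sns].
move=> a msns_a; rewrite scalerDr ann_v ?ann_w ?addr0 //.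
  by apply: idealProd_catr msns_a => m; [move/Sms | move/Sns]; apply: S_ideal.
exact: idealProd_catl msns_a.
Qed.

Lemma comp_sum (I : finType) (P : pred I) (x : I -> M) :
  (forall i, P i -> Defs.comp S (x i)) -> Defs.comp S (\sum_(i | P i) x i).
Proof. by move=> Sx; apply: big_ind => //; [apply: comp0 | apply: compD]. Qed.

End IdealSet.

Lemma comp_linear (M' : lmodType G) (h : {linear M -> M'}) S v :
  Defs.comp S v -> Defs.comp S (h v).
Proof.
case=> ms [Sms ann]; exists ms; split=> // a /ann.
by rewrite -linearZZ => ->; rewrite linear0.
Qed.

Lemma comp_inj (M' : lmodType G) (h : {linear M -> M'}) S v :
  injective h -> Defs.comp S (h v) -> Defs.comp S v.
Proof.
move=> h_inj [ms [Sms ann]]; exists ms; split=> // a /ann.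
by rewrite -linearZZ -(linear0 h) => /h_inj.
Qed.

Lemma comp_disjoint S1 S2 v :
  (forall m, S1 m -> twoSidedIdeal m) -> (forall n, S2 n -> twoSidedIdeal n) ->
  (forall m n, S1 m -> S2 n -> comaximal m n) ->
  Defs.comp S1 v -> Defs.comp S2 v -> v = 0.
Proof.
move=> S1_ideal S2_ideal S12 [ms [Sms ann1]] [ns [Sns ann2]].
have [a [b [ms_a ns_b E]]] : comaximal (idealProd ms) (idealProd ns).
  apply: comaximal_prod => [m /Sms /S1_ideal | n /Sns /S2_ideal | m n /Sms Sm /Sns] //.
  exact: S12.
by rewrite -[v]scale1r E scalerDl ann1 ?ann2 ?addr0.
Qed.

End Components.

Section BlockComponents.
Variables (k : fieldType) (G : algType k).
Variable eqv : (G -> Prop) -> (G -> Prop) -> Prop.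
Hypothesis eqv_equiv : equiv_on_cfs eqv.
Variable M : lmodType G.
Implicit Types (C : (G -> Prop) -> Prop) (v w : M).

Definition blockFamily (I : Type) (B : I -> (G -> Prop) -> Prop) (x : I -> M) :=
  forall i, isClass eqv (B i) /\ Defs.comp (B i) (x i).

Definition blockSum v := exists n (B : 'I_n -> (G -> Prop) -> Prop) x,
  blockFamily B x /\ v = \sum_(i < n) x i.

Lemma comp_sum_others_eq0 (I : finType) (P : pred I)
    (B : I -> (G -> Prop) -> Prop) (x : I -> M) C w :
  isClass eqv C -> Defs.comp C w ->
  (forall i, P i ->
     [/\ isClass eqv (B i), Defs.comp (B i) (x i) & ~ sameClass C (B i)]) ->
  w = \sum_(i | P i) x i -> w = 0.
Proof.
move=> HC Cw Hx Ew.
pose S m := exists2 i, P i & B i m.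
apply: (comp_disjoint (S1 := C) (S2 := S)) Cw _.
- by move=> m; apply: class_ideal HC.
- by move=> n [i /Hx [HBi _ _]]; apply: class_ideal HBi.
- by move=> m n Cm [i /Hx [HBi _ CBi] Bn]; apply: class_comaximal HC HBi CBi Cm Bn.
rewrite Ew; apply: comp_sum => [n [i /Hx [HBi _ _]] | i Pi].
  exact: class_ideal HBi.
by have [_ Bx _] := Hx i Pi; apply: compS Bx => m Bm; exists i.
Qed.

Lemma comp_eq_sum_sameClass (I : finType) (B : I -> (G -> Prop) -> Prop)
    (x : I -> M) C w :
  blockFamily B x -> isClass eqv C -> Defs.comp C w ->
  w = \sum_i x i -> w = \sum_(i | `[< sameClass C (B i) >]) x i.
Proof.
move=> Hx HC Cw; rewrite (bigID (fun i => `[< sameClass C (B i) >])) /= => Ew.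
apply/eqP; rewrite -subr_eq0; apply/eqP.
apply: (comp_sum_others_eq0 (P := fun i => ~~ `[< sameClass C (B i) >])
  (B := B) (x := x) HC).
- apply: compD Cw _ => [m|]; first exact: class_ideal HC.
  apply/compN/comp_sum => [m|i /asboolP CBi]; first exact: class_ideal HC.
  by have [_ Bx] := Hx i; apply: compS Bx => m /CBi.
- by move=> i /asboolPn nCBi; have [HBi Bx] := Hx i; split.
- by rewrite Ew addrAC subrr add0r.
Qed.

Lemma blockModule_blockSum : (forall v, blockSum v) -> blockModule eqv M.
Proof.
move=> Mdec; split=> // n B x Hx B_distinct sum_x0 i.
have [HBi _] := Hx i.
rewrite (comp_eq_sum_sameClass Hx HBi (comp0 _ _) (esym sum_x0)).
rewrite (big_pred1 i) // => j /=.
apply/asboolP/eqP => [BiBj | -> //].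
by apply/eqP; rewrite eq_sym; apply: contraT => /B_distinct.
Qed.

Lemma sum_classRep_eq0 (I : finType) (B : I -> (G -> Prop) -> Prop) (x : I -> M) :
  blockFamily B x -> \sum_i x i = 0 ->
  forall j, \sum_(i | classRep B i == j) x i = 0.
Proof.
move=> Hx sum_x0 j.
case: (pickP (fun i => classRep B i == j)) => [i0 /eqP rep_i0 | no_rep]; last first.
  by rewrite big_pred0.
have [HBj _] := Hx j.
rewrite (eq_bigl (fun i => `[< sameClass (B j) (B i) >])) => [|i].
  by rewrite -(comp_eq_sum_sameClass Hx HBj (comp0 _ _) (esym sum_x0)).
have Bj_Bi0 := classRep_same B i0; rewrite rep_i0 in Bj_Bi0.
apply/eqP/asboolP => [<- | Bj_Bi]; first exact: classRep_same.
by rewrite -rep_i0; apply: classRep_eq => m; rewrite -Bj_Bi Bj_Bi0.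
Qed.

End BlockComponents.

Lemma blockFamily_linear (k : fieldType) (G : algType k)
    (eqv : (G -> Prop) -> (G -> Prop) -> Prop) (M M' : lmodType G)
    (h : {linear M -> M'}) (I : Type) (B : I -> (G -> Prop) -> Prop) (x : I -> M) :
  blockFamily eqv B x -> blockFamily eqv B (fun i => h (x i)).
Proof. by move=> Hx i; have [HBi Bx] := Hx i; split=> //; apply: comp_linear. Qed.

Lemma blockSum_linear (k : fieldType) (G : algType k)
    (eqv : (G -> Prop) -> (G -> Prop) -> Prop) (M M' : lmodType G)
    (h : {linear M -> M'}) (v : M) :
  blockSum eqv v -> blockSum eqv (h v).
Proof.
case=> n [B [x [Hx ->]]]; exists n, B, (fun i => h (x i)).
by rewrite linear_sum; split=> //; apply: blockFamily_linear.
Qed.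

Section ShortExact.
Variables (k : fieldType) (G : algType k).
Variable eqv : (G -> Prop) -> (G -> Prop) -> Prop.
Hypothesis eqv_equiv : equiv_on_cfs eqv.
Variables (U V W : lmodType G) (f : {linear U -> V}) (g : {linear V -> W}).
Hypothesis f_inj : injective f.
Hypothesis g_surj : forall w : W, exists v : V, g v = w.
Hypothesis ker_g : forall v : V, g v = 0 <-> exists u : U, f u = v.

Lemma blockSum_ker u : blockSum eqv (f u) -> blockSum eqv u.
Proof.
case=> n [B [x [Hx fu_E]]].
have sum_gx0 : \sum_i g (x i) = 0 by rewrite -linear_sum -fu_E; apply/ker_g; exists u.
(* [y j] is the part of the class of [j] when [j] is its representative, else [0]. *)
pose y j := \sum_(i | classRep B i == j) x i.
have By j : Defs.comp (B j) (y j).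
  have [HBj _] := Hx j; apply: comp_sum => [m|i /eqP <-]; first exact: class_ideal HBj.
  by have [_ Bx] := Hx i; apply: compS Bx => m /(classRep_same B i).
have /fin_all_exists [u' fu'] : forall j, exists u', f u' = y j.
  move=> j; apply/ker_g; rewrite linear_sum.
  exact: (sum_classRep_eq0 eqv_equiv (blockFamily_linear g Hx) sum_gx0).
exists n, B, u'; split=> [j|].
  by have [HBj _] := Hx j; split=> //; apply: (comp_inj f_inj); rewrite fu'.
apply: f_inj; rewrite linear_sum fu_E (partition_big (classRep B) xpredT) //=.
by apply: eq_bigr => j _; rewrite fu'.
Qed.

Lemma inSupp_inj B : inSupp U B -> inSupp V B.
Proof.
case=> u [Bu u0]; exists (f u); split; first exact: comp_linear.
by rewrite -(linear0 f) => /f_inj.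
Qed.

Lemma inSupp_exact B : inSupp V B -> inSupp U B \/ inSupp W B.
Proof.
case=> v [Bv v0]; have [gv0 | gv_neq0] := eqVneq (g v) 0.
  have [u fu] := (ker_g v).1 gv0; left; exists u; split.
    by apply: (comp_inj f_inj); rewrite fu.
  by move=> u0; apply: v0; rewrite -fu u0 linear0.
by right; exists (g v); split; [apply: comp_linear | apply/eqP].
Qed.

Lemma inSupp_surj B : isClass eqv B -> (forall v : V, blockSum eqv v) ->
  inSupp W B -> inSupp V B.
Proof.
move=> HB Vdec [w [Bw w0]]; have [v gv] := g_surj w.
have [n [C [x [Hx v_E]]]] := Vdec v.
have w_E : w = \sum_i g (x i) by rewrite -gv v_E linear_sum.
move: w0; rewrite (comp_eq_sum_sameClass eqv_equiv (blockFamily_linear g Hx) HB Bw w_E).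
rewrite -linear_sum => w0.
exists (\sum_(i | `[< sameClass B (C i) >]) x i); split.
  apply: comp_sum => [m|i /asboolP BCi]; first exact: class_ideal HB.
  by have [_ Cx] := Hx i; apply: compS Cx => m /BCi.
by move=> v'0; apply: w0; rewrite v'0 linear0.
Qed.

End ShortExact.

Theorem mainTheorem7 (k : fieldType) (G : algType k)
    (eqv : (G -> Prop) -> (G -> Prop) -> Prop)
    (U V W : lmodType G) (f : {linear U -> V}) (g : {linear V -> W}) :
  equiv_on_cfs eqv ->
  injective f ->
  (forall w : W, exists v : V, g v = w) ->
  (forall v : V, g v = 0 <-> exists u : U, f u = v) ->
  blockModule eqv V ->
  [/\ blockModule eqv U, blockModule eqv W &
      forall B, isClass eqv B ->
        (inSupp V B <-> inSupp U B \/ inSupp W B)].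
Proof.
move=> eqv_equiv f_inj g_surj ker_g [Vdec _]; split.
- apply: blockModule_blockSum => // u.
  by apply: (blockSum_ker eqv_equiv f_inj ker_g); apply: Vdec.
- apply: blockModule_blockSum => // w; have [v <-] := g_surj w.
  exact/blockSum_linear/Vdec.
- move=> B HB; split; first exact: (inSupp_exact f_inj ker_g).
  by case=> [/(inSupp_inj f_inj) | /(inSupp_surj eqv_equiv g_surj HB Vdec)].
Qed.
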